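(* Let $A$ be a real $n\times n$ matrix, let $\mathbf{y}$ be a symmetric Nash equilibrium of the bimatrix game $(A,A^T)$ (i.e., $(\mathbf{y},\mathbf{y})$ is a Nash equilibrium), and let $D$ be an $n\times n$ diagonal matrix with all diagonal entries positive. Then there exists a probability vector $\mathbf{x}\in\mathbb{R}^n$ such that $(\mathbf{x},\mathbf{y})$ is a Nash equilibrium of the bimatrix game $(A,D)$.
   Context: A bimatrix game $(A,B)$ with $n\times n$ matrices: players choose probability vectors $\mathbf{x},\mathbf{y}\in\mathbb{R}^n$, payoffs $\mathbf{x}^TA\mathbf{y}$ (first player) and $\mathbf{x}^TB\mathbf{y}$ (second player); a Nash equilibrium is a profile where no player gains by unilateral deviation. *)

(* Real matrices are modelled over an arbitrary real field R
   (the statement is purely order-algebraic). *)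
From HB Require Import structures.
From mathcomp Require Import all_boot all_order all_algebra.
Set Implicit Arguments. Unset Strict Implicit. Unset Printing Implicit Defensive.
Import Order.TTheory GRing.Theory Num.Theory.
Local Open Scope ring_scope.

Definition prob_vec (R : realFieldType) (n : nat) (x : 'cV[R]_n) : Prop :=
  (forall i, 0 <= x i 0) /\ \sum_(i < n) x i 0 = 1.

Definition payoff (R : realFieldType) (n : nat) (M : 'M[R]_n) (x y : 'cV[R]_n) : R :=
  (x^T *m M *m y) 0 0.

Definition nash_eq (R : realFieldType) (n : nat) (A B : 'M[R]_n) (x y : 'cV[R]_n) : Prop :=
  [/\ prob_vec x, prob_vec y,
      (forall x', prob_vec x' -> payoff A x' y <= payoff A x y) &
      (forall y', prob_vec y' -> payoff B x y' <= payoff B x y)].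

Definition pos_diag (R : realFieldType) (n : nat) (D : 'M[R]_n) : Prop :=
  (forall i j, i != j -> D i j = 0) /\ (forall i, 0 < D i i).

(** A mixed strategy is a best reply exactly when it is supported on the pure
    strategies of maximal payoff.  Against [y] the row player of [(A, D)] faces
    the same payoffs as in [(A, A^T)], so every [x] supported on the support of
    [y] is a best reply.  Taking [x i] proportional to [1 / D i i] on that
    support makes the column player's payoff [(x^T D) j = x j * D j j] constant
    on the support of [y] and zero elsewhere, so [y] is a best reply to [x]. *)
From HB Require Import structures.
From mathcomp Require Import all_boot all_order all_algebra.
Set Implicit Arguments. Unset Strict Implicit. Unset Printing Implicit Defensive.
Import Order.TTheory GRing.Theory Num.Theory.
Local Open Scope ring_scope.

Section BestReply.
Variables (R : realFieldType) (n : nat).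
Implicit Types (M : 'M[R]_n) (x y : 'cV[R]_n).

Definition best_reply M x y := forall x', prob_vec x' -> payoff M x' y <= payoff M x y.

Lemma payoffE M x y : payoff M x y = \sum_i x i 0 * (M *m y) i 0.
Proof. by rewrite /payoff -mulmxA mxE; apply: eq_bigr => i _; rewrite mxE. Qed.

Lemma payoff_tr M x y : payoff M x y = payoff M^T y x.
Proof.
rewrite /payoff -[LHS]/(_ 0 0) -[x^T *m M *m y]trmxK [LHS]mxE.
by rewrite !trmx_mul trmxK mulmxA.
Qed.

Lemma prob_vec_delta (k : 'I_n) : prob_vec (delta_mx k 0 : 'cV[R]_n).
Proof.
split=> [i|]; first by rewrite mxE ler0n.
rewrite (bigD1 k) //= mxE !eqxx big1 ?addr0 // => i /negbTE ik.
by rewrite mxE ik.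
Qed.

Lemma payoff_delta M (k : 'I_n) y : payoff M (delta_mx k 0) y = (M *m y) k 0.
Proof.
rewrite payoffE (bigD1 k) //= mxE !eqxx mul1r big1 ?addr0 // => i /negbTE ik.
by rewrite mxE ik mul0r.
Qed.

Lemma payoff_le M x y c :
  prob_vec x -> (forall i, (M *m y) i 0 <= c) -> payoff M x y <= c.
Proof.
move=> [x_ge0 x_sum1] le_c; rewrite payoffE -[c]mul1r -x_sum1 big_distrl /=.
by apply: ler_sum => i _; rewrite ler_wpM2l.
Qed.

Lemma payoff_eq M x y c :
  prob_vec x -> (forall i, x i 0 != 0 -> (M *m y) i 0 = c) -> payoff M x y = c.
Proof.
move=> [_ x_sum1] eq_c; rewrite payoffE -[RHS]mul1r -x_sum1 big_distrl /=.
apply: eq_bigr => i _; have [-> | /eq_c -> //] := eqVneq (x i 0) 0.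
by rewrite !mul0r.
Qed.

Lemma best_reply_of_support M x y c :
  prob_vec x -> (forall i, (M *m y) i 0 <= c) ->
  (forall i, x i 0 != 0 -> (M *m y) i 0 = c) -> best_reply M x y.
Proof. by move=> px le_c eq_c x' px'; rewrite (payoff_eq px eq_c) payoff_le. Qed.

Lemma best_reply_pure_le M x y (k : 'I_n) :
  best_reply M x y -> (M *m y) k 0 <= payoff M x y.
Proof. by move/(_ _ (prob_vec_delta k)); rewrite payoff_delta. Qed.

(** The payoff is an average of the pure payoffs, each at most the maximum, so
    all the weight must sit on pure strategies attaining it. *)
Lemma best_reply_support_eq M x y (k : 'I_n) :
  prob_vec x -> best_reply M x y -> x k 0 != 0 -> (M *m y) k 0 = payoff M x y.
Proof.
move=> [x_ge0 x_sum1] br xk_neq0; set p := payoff M x y.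
have gap_ge0 i : 0 <= x i 0 * (p - (M *m y) i 0).
  by rewrite mulr_ge0 // subr_ge0 best_reply_pure_le.
have gap_sum0 : \sum_i x i 0 * (p - (M *m y) i 0) = 0.
  under eq_bigr do rewrite mulrBr.
  by rewrite sumrB -big_distrl /= x_sum1 mul1r -payoffE subrr.
have : x k 0 * (p - (M *m y) k 0) = 0.
  apply/eqP; rewrite eq_le gap_ge0 andbT -gap_sum0 (bigD1 k) //= lerDl.
  exact: sumr_ge0.
by move/eqP; rewrite mulf_eq0 (negbTE xk_neq0) subr_eq0 => /eqP.
Qed.

End BestReply.

Section Equalizer.
Variables (R : realFieldType) (n : nat) (D : 'M[R]_n) (y : 'cV[R]_n).
Hypotheses (hD : pos_diag D) (py : prob_vec y).

Definition equalizer_weight (i : 'I_n) : R := if 0 < y i 0 then (D i i)^-1 else 0.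

Definition equalizer : 'cV[R]_n :=
  (\sum_i equalizer_weight i)^-1 *: \col_i equalizer_weight i.

Lemma equalizer_weight_ge0 i : 0 <= equalizer_weight i.
Proof.
by rewrite /equalizer_weight; case: ifP => // _; rewrite invr_ge0 ltW // (proj2 hD).
Qed.

Lemma equalizer_weight_sum_gt0 : 0 < \sum_i equalizer_weight i.
Proof.
have [k yk_gt0] : exists k, 0 < y k 0.
  apply/existsP; apply: contraT; rewrite negb_exists => /forallP y_le0.
  have : \sum_i y i 0 <= 0 by apply: sumr_le0 => i _; rewrite leNgt y_le0.
  by rewrite (proj2 py) ler10.
rewrite (bigD1 k) //= {1}/equalizer_weight yk_gt0 ltr_pwDl ?invr_gt0 ?(proj2 hD) //.
by apply: sumr_ge0 => i _; apply: equalizer_weight_ge0.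
Qed.

Lemma prob_vec_equalizer : prob_vec equalizer.
Proof.
have S_gt0 := equalizer_weight_sum_gt0.
split=> [i|]; first by rewrite !mxE mulr_ge0 ?equalizer_weight_ge0 // invr_ge0 ltW.
under eq_bigr do rewrite !mxE.
by rewrite -big_distrr /= mulVf ?gt_eqF.
Qed.

Lemma equalizer_support i : equalizer i 0 != 0 -> y i 0 != 0.
Proof.
rewrite !mxE /equalizer_weight; case: ifP => [/gt_eqF -> // | _].
by rewrite mulr0 eqxx.
Qed.

Lemma pos_diag_mulmx (z : 'cV[R]_n) i : (D^T *m z) i 0 = D i i * z i 0.
Proof.
rewrite mxE (bigD1 i) //= mxE big1 ?addr0 // => j ji.
by rewrite mxE (proj1 hD) ?mul0r.
Qed.

Lemma equalizer_best_reply : best_reply D^T y equalizer.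
Proof.
have S_gt0 := equalizer_weight_sum_gt0.
set c := (\sum_i equalizer_weight i)^-1.
have pay_eq i : (D^T *m equalizer) i 0 = if 0 < y i 0 then c else 0.
  rewrite pos_diag_mulmx !mxE /equalizer_weight; case: ifP => _; last first.
    by rewrite !mulr0.
  by rewrite mulrCA mulfV ?mulr1 ?gt_eqF ?(proj2 hD).
apply: (best_reply_of_support (c := c) py) => i.
  by rewrite pay_eq; case: ifP => // _; rewrite invr_ge0 ltW.
by rewrite pay_eq lt_def => ->; rewrite (proj1 py).
Qed.

End Equalizer.

Theorem theoremA3 (R : realFieldType) (n : nat) (A D : 'M[R]_n) (y : 'cV[R]_n) :
  nash_eq A A^T y y -> pos_diag D ->
  exists x : 'cV[R]_n, prob_vec x /\ nash_eq A D x y.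
Proof.
move=> [py _ y_br _] hD.
have px := prob_vec_equalizer hD py.
exists (equalizer D y); split=> //; split=> //.
- apply: (best_reply_of_support (c := payoff A y y) px) => i.
    exact: best_reply_pure_le.
  by move/equalizer_support; apply: best_reply_support_eq.
- by move=> z pz; rewrite !(payoff_tr D); apply: equalizer_best_reply.
Qed.
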